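(* Let $n\ge 2$ and $1\le m\le n-1$. Write $g\in \mathrm{SO}(n)$ as a block matrix $g=\begin{pmatrix}P&Q\\ R&T\end{pmatrix}$ with blocks of sizes $(m+(n-m))\times(m+(n-m))$, and define (for all $g$ with $\det(1+P)\neq 0$, i.e. almost everywhere) $$\Upsilon^m(g)=T-R(1+P)^{-1}Q .$$ Then: (a) $\Upsilon^m$ maps $\mathrm{SO}(n)$ (where defined) into $\mathrm{SO}(n-m)$; (b) for $k,m\ge 1$ with $k+m\le n-1$ one has $\Upsilon^k\circ\Upsilon^m=\Upsilon^{k+m}$ (wherever both sides are defined), where $\Upsilon^k$ on the right of the composition is the analogous map $\mathrm{SO}(n-m)\to\mathrm{SO}(n-m-k)$; (c) for $1\le p\le n-1$, if $g\in\mathrm{SO}(n)$ is such that $1+g$ is invertible and $\Upsilon^{n-p}(g)$ is defined, and $S=(g-1)(g+1)^{-1}$, then $$\{S\}_p=\big(\Upsilon^{n-p}(g)-1\big)\big(\Upsilon^{n-p}(g)+1\big)^{-1},$$ where $\{S\}_p$ denotes the lower right $p\times p$ corner of $S$.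
   Context: For a matrix $A$, $\{A\}_p$ denotes its lower right $p\times p$ corner. *)

From HB Require Import structures.
From mathcomp Require Import all_boot all_order all_algebra.
Set Implicit Arguments. Unset Strict Implicit. Unset Printing Implicit Defensive.
Import Order.TTheory GRing.Theory Num.Theory.
Local Open Scope ring_scope.

Definition is_SO (R : realFieldType) (n : nat) (g : 'M[R]_n) : Prop :=
  g *m g^T = 1%:M /\ \det g = 1.

Definition UpsDefined (R : realFieldType) (m l : nat) (g : 'M[R]_(m + l)) : Prop :=
  (1%:M + ulsubmx g) \in unitmx.

Definition Upsilon (R : realFieldType) (m l : nat) (g : 'M[R]_(m + l)) : 'M[R]_l :=
  drsubmx g - dlsubmx g *m invmx (1%:M + ulsubmx g) *m ursubmx g.

Definition corner (R : realFieldType) (q p : nat) (A : 'M[R]_(q + p)) : 'M[R]_p :=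
  drsubmx A.

(** Write [g = [[P, Q], [R, T]]], [X = -(1 + P)^-1 Q] and [U = Upsilon g].
    Everything rests on the identity [g [X; 1] = [-X; U]], i.e.
    [(1 + g) [X; 1] = [0; 1 + U]], and on [U] being the only matrix
    for which such an [X] exists.
    (a) Since [g] preserves the Gram matrix of [[X; 1]], [X^T X + 1 = X^T X + U^T U].
        [U] is the Schur complement of [1 + P] in [g + diag(1, 0)], and multiplying
        that matrix on the left by [g^T] makes it block triangular with determinant
        [det (1 + P)]; hence [det U = det g].
    (b) Composing the identities for [g] and for [Upsilon g] gives the identity for
        the one-step reduction with [X = [X1 [X2; 1]; X2]].
    (c) Inverting [1 + g] on [[0; 1 + U]] shows that the lower right corner of
        [(1 + g)^-1] is [(1 + U)^-1], and the Cayley transform is [1 - 2 (1 + A)^-1]. *)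

From mathcomp Require Import all_boot all_algebra.
Import GRing.Theory.
Local Open Scope ring_scope.

Set Implicit Arguments. Unset Strict Implicit.

Lemma mulmx_castmx (R : pzRingType) m m' n n' p p'
    (em : m = m') (en : n = n') (ep : p = p') (A : 'M[R]_(m, n)) (B : 'M[R]_(n, p)) :
  castmx (em, en) A *m castmx (en, ep) B = castmx (em, ep) (A *m B).
Proof. by case: m' / em; case: n' / en; case: p' / ep; rewrite !castmx_id. Qed.

Section Cayley.
Variable R : comUnitRingType.

Definition cayley n (A : 'M[R]_n) : 'M[R]_n := (A - 1%:M) *m invmx (A + 1%:M).

Lemma cayleyE n (A : 'M[R]_n) :
  (A + 1%:M) \in unitmx -> cayley A = 1%:M - invmx (A + 1%:M) *+ 2.
Proof.
move=> unitA1; rewrite /cayley; have -> : A - 1%:M = (A + 1%:M) - (1%:M + 1%:M).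
  by rewrite opprD addrA addrK.
by rewrite mulmxBl mulmxV // mulmxDl mul1mx mulr2n.
Qed.

End Cayley.

Section UlUnit.
Variables (R : comPzRingType) (m l : nat).
Implicit Types g : 'M[R]_(m + l).

Definition ul_unit_mx : 'M[R]_(m + l) := block_mx 1%:M 0 0 0.

Lemma det_add_ul_unit_orthogonal g : g^T *m g = 1%:M ->
  \det (g + ul_unit_mx) = \det g * \det (1%:M + ulsubmx g).
Proof.
move=> gTg; have detg2 : \det g * \det g = 1.
  by rewrite -[X in X * _]det_tr -det_mulmx gTg det1.
have gT_mul : g^T *m (g + ul_unit_mx) = block_mx (1%:M + (ulsubmx g)^T) 0 (ursubmx g)^T 1%:M.
  rewrite mulmxDr gTg -(submxK g) tr_block_mx /ul_unit_mx mulmx_block.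
  rewrite !mulmx0 !mulmx1 !addr0 block_mxKul block_mxKur.
  by rewrite (scalar_mx_block m l) add_block_mx !addr0 !add0r.
have : \det g * \det (g + ul_unit_mx) = \det (1%:M + ulsubmx g).
  rewrite -det_tr -det_mulmx gT_mul det_lblock det1 mulr1.
  by rewrite -det_tr linearD /= trmx1 trmxK.
by move <-; rewrite mulrA detg2 mul1r.
Qed.

End UlUnit.

Arguments ul_unit_mx {R m l}.

Section Upsilon.
Variable R : realFieldType.

Section Graph.
Variables m l : nat.
Implicit Types g : 'M[R]_(m + l).

Definition Upsilon_coef g : 'M[R]_(m, l) :=
  - (invmx (1%:M + ulsubmx g) *m ursubmx g).

Lemma mul_Upsilon_graph g : UpsDefined g ->
  g *m col_mx (Upsilon_coef g) 1%:M = col_mx (- Upsilon_coef g) (Upsilon g).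
Proof.
move=> hu; rewrite -{1}(submxK g) mul_block_col /Upsilon_coef /Upsilon !mulmx1 opprK.
congr col_mx; last by rewrite mulmxN mulmxA addrC.
have PinvP1 : ulsubmx g *m invmx (1%:M + ulsubmx g) = 1%:M - invmx (1%:M + ulsubmx g).
  by rewrite -[X in X - _](mulmxV hu) mulmxDl mul1mx addrAC subrr add0r.
by rewrite mulmxN mulmxA PinvP1 mulmxBl mul1mx opprB addrNK.
Qed.

Lemma Upsilon_graph_uniq g X U : UpsDefined g ->
  g *m col_mx X 1%:M = col_mx (- X) U -> U = Upsilon g.
Proof.
move=> hu; rewrite -{1}(submxK g) mul_block_col !mulmx1 => /eq_col_mx [hX hU].
have : (1%:M + ulsubmx g) *m X = - ursubmx g.
  by rewrite mulmxDl mul1mx -[ulsubmx g *m X](addrK (ursubmx g)) hX addrA subrr add0r.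
move/(congr1 (mulmx (invmx (1%:M + ulsubmx g)))); rewrite mulKmx // => eX.
by rewrite -hU eX /Upsilon !mulmxN mulmxA addrC.
Qed.

Lemma Upsilon_orthogonal g : g *m g^T = 1%:M -> UpsDefined g ->
  Upsilon g *m (Upsilon g)^T = 1%:M.
Proof.
move=> /mulmx1C gTg hu; apply: mulmx1C.
have := mul_Upsilon_graph hu; set X := Upsilon_coef g; set U := Upsilon g => hgX.
have gram : (col_mx X 1%:M)^T *m col_mx X 1%:M = (col_mx (- X) U)^T *m col_mx (- X) U.
  by rewrite -hgX trmx_mul mulmxA -(mulmxA _ g^T) gTg mulmx1.
move: gram; rewrite !tr_col_mx !mul_row_col trmx1 mul1mx [(- X)^T]linearN /=.
by rewrite mulNmx mulmxN opprK => /addrI ->.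
Qed.

Lemma det_add_ul_unit_Upsilon g : UpsDefined g ->
  \det (g + ul_unit_mx) = \det (1%:M + ulsubmx g) * \det (Upsilon g).
Proof.
move=> hu; rewrite -{1}(submxK g) /ul_unit_mx add_block_mx !addr0 (addrC _ 1%:M).
have -> : block_mx (1%:M + ulsubmx g) (ursubmx g) (dlsubmx g) (drsubmx g) =
    block_mx 1%:M 0 (dlsubmx g *m invmx (1%:M + ulsubmx g)) 1%:M *m
    block_mx (1%:M + ulsubmx g) (ursubmx g) 0 (Upsilon g).
  rewrite mulmx_block !mul1mx ?mul0mx ?mulmx0 ?addr0 ?add0r mulmxKV //.
  by rewrite /Upsilon [_ + (_ - _)]addrC subrK.
by rewrite det_mulmx det_lblock det_ublock !det1 !mul1r.
Qed.

Lemma det_Upsilon g : g *m g^T = 1%:M -> UpsDefined g -> \det (Upsilon g) = \det g.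
Proof.
move=> /mulmx1C gTg hu; have : \det (1%:M + ulsubmx g) != 0.
  by move: hu; rewrite /UpsDefined unitmxE unitfE.
move/mulfI; apply.
by rewrite -det_add_ul_unit_Upsilon // det_add_ul_unit_orthogonal // mulrC.
Qed.

Lemma Upsilon_SO g : is_SO g -> UpsDefined g -> is_SO (Upsilon g).
Proof.
by move=> [ggT detg] hu; split; [exact: Upsilon_orthogonal | rewrite det_Upsilon].
Qed.

Lemma drsubmx_inv_add1 g : (g + 1%:M) \in unitmx -> UpsDefined g ->
  drsubmx (invmx (g + 1%:M)) *m (Upsilon g + 1%:M) = 1%:M.
Proof.
move=> unit_g1 hu.
have : (g + 1%:M) *m col_mx (Upsilon_coef g) 1%:M = col_mx 0 (Upsilon g + 1%:M).
  by rewrite mulmxDl mul1mx mul_Upsilon_graph // add_col_mx addNr.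
move/(congr1 (mulmx (invmx (g + 1%:M)))); rewrite mulKmx //.
by rewrite -[in RHS](submxK (invmx _)) mul_block_col !mulmx0 !add0r => /eq_col_mx [_ <-].
Qed.

Lemma cayley_drsubmx g : (g + 1%:M) \in unitmx -> UpsDefined g ->
  drsubmx (cayley g) = cayley (Upsilon g).
Proof.
move=> unit_g1 hu; have hD := drsubmx_inv_add1 unit_g1 hu.
have unit_U1 : (Upsilon g + 1%:M) \in unitmx by case/mulmx1_unit: hD.
rewrite !cayleyE //; have -> : invmx (Upsilon g + 1%:M) = drsubmx (invmx (g + 1%:M)).
  by rewrite -[LHS]mul1mx -{1}hD mulmxK.
have drsubmx1 : drsubmx (1%:M : 'M[R]_(m + l)) = 1%:M.
  by rewrite (scalar_mx_block m l) block_mxKdr.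
rewrite -[in RHS]drsubmx1.
by apply/matrixP => i j; rewrite !mxE.
Qed.

End Graph.

Lemma Upsilon_comp k m l (g : 'M[R]_(m + (k + l))) :
  UpsDefined g -> UpsDefined (Upsilon g) ->
  UpsDefined (castmx (addnA m k l, addnA m k l) g) ->
  Upsilon (Upsilon g) = Upsilon (castmx (addnA m k l, addnA m k l) g).
Proof.
move=> hu1 hu2 hu3.
have hg := mul_Upsilon_graph hu1; have hU := mul_Upsilon_graph hu2.
set X1 := Upsilon_coef g in hg; set X2 := Upsilon_coef (Upsilon g) in hU.
set Z := X1 *m col_mx X2 1%:M.
apply: (Upsilon_graph_uniq (X := col_mx Z X2) hu3).
have -> : col_mx (col_mx Z X2) 1%:M =
    castmx (addnA m k l, erefl l) (col_mx X1 1%:M *m col_mx X2 1%:M).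
  by rewrite mul_col_mx mul1mx col_mxA castmx_comp castmx_id.
rewrite mulmx_castmx mulmxA hg mul_col_mx hU mulNmx -/Z.
by rewrite col_mxA castmx_comp castmx_id opp_col_mx.
Qed.

End Upsilon.

Theorem proposition2p1 (R : realFieldType) :
  (* (a): n = m + l with 1 <= m <= n - 1, i.e. m >= 1, l >= 1 *)
  (forall (m l : nat) (g : 'M[R]_(m + l)),
      (0 < m)%N -> (0 < l)%N ->
      is_SO g -> UpsDefined g -> is_SO (Upsilon g)) /\
  (* (b): n = m + (k + l), k, m >= 1, k + m <= n - 1 i.e. l >= 1 *)
  (forall (k m l : nat) (g : 'M[R]_(m + (k + l))),
      (0 < k)%N -> (0 < m)%N -> (0 < l)%N ->
      is_SO g ->
      UpsDefined g ->
      UpsDefined (Upsilon g) ->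
      UpsDefined (castmx (addnA m k l, addnA m k l) g) ->
      Upsilon (Upsilon g) = Upsilon (castmx (addnA m k l, addnA m k l) g)) /\
  (* (c): n = q + p, q = n - p, 1 <= p <= n - 1 *)
  (forall (q p : nat) (g : 'M[R]_(q + p)),
      (0 < q)%N -> (0 < p)%N ->
      is_SO g -> (g + 1%:M) \in unitmx -> UpsDefined g ->
      let S := (g - 1%:M) *m invmx (g + 1%:M) in
      corner S = (Upsilon g - 1%:M) *m invmx (Upsilon g + 1%:M)).
Proof.
split; first by move=> m l g _ _; exact: Upsilon_SO.
split; first by move=> k m l g _ _ _ _; exact: Upsilon_comp.
by move=> q p g _ _ _; exact: cayley_drsubmx.
Qed.
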